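(* For each $j\geq 1$ and $\tau=\tau_j$, the topological zeta function is the polynomial reciprocal $$1/\zeta (\tau_j, z) = (1-z) \prod_{n=0}^{j} (1-z^{2^n}),$$ whose zeroes all lie on the unit circle $|z|=1$; moreover $\zeta(\tau_j,z)\to\zeta(\tau_\infty,z)$ as $j\to\infty$, where $1/\zeta (\tau_\infty, z) = (1-z) \prod_{n=0}^{\infty} (1-z^{2^n})$.
   Context: For a sequence $s=s_1s_2s_3\dots$ of $0$'s and $1$'s, set $\tau(s)=0.t_1t_2t_3\dots=\sum_{k\geq1}t_k2^{-k}$ with $t_k=\sum_{i=1}^k s_i \pmod 2$. Define kneading sequences $K_1=\overline{1}$, $K_2=\overline{10}$, $K_3=\overline{1011}$, and in general $K_{j+1}$ is obtained from $K_j$ by duplicating the repeating block and reversing its last symbol (equivalently applying the Feigenbaum substitution $1\to10$, $0\to11$ to the repeating block); $K_j$ has period $2^j$ and is the kneading sequence of a unimodal map with a periodic attractor of period $2^j$, and $K_\infty=\lim_j K_j$. Set $\tau_j=\tau(K_j)$ (so $\tau_1=2/3$, $\tau_2=4/5$, $\tau_3=14/17,\dots$) and $\tau_\infty=\lim_j\tau_j=\tau(K_\infty)$. For a unimodal map $f$ with parameter $\tau$, the topological (Artin–Mazur) zeta function is $\zeta(\tau,z)=\exp\sum_{n\geq1}\frac{z^n}{n}\#\mathrm{Per}_n(f)$, which depends only on $\tau$; by Milnor–Thurston, if $\tau=0.\overline{t_1\dots t_n}$ has periodic kneading sequence then $\zeta(\tau,z)=1/\big((1-z)(1+\sum_{k=1}^{n-1}\epsilon_k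 z^k)\big)$ with $\epsilon_k=1-2t_k$, and otherwise $\zeta(\tau,z)=1/\big((1-z)(1+\sum_{k\geq1}\epsilon_k z^k)\big)$. *)

From Stdlib Require Import Reals List Arith ClassicalEpsilon.
From Coquelicot Require Import Coquelicot Complex.
Import ListNotations.

(* Binary sequences s = s_1 s_2 s_3 ... are functions nat -> bool;
   only the values at indices k >= 1 are meaningful (index 0 is ignored). *)

Fixpoint tseq (s : nat -> bool) (k : nat) : bool :=
  match k with
  | O => false
  | S k' => xorb (tseq s k') (s k)
  end.

Definition feig_sub (b : bool) : list bool :=
  if b then [true; false] else [true; true].

(* Repeating block of K_j, of length 2^j:
   block 0 = 1, block 1 = 10, block 2 = 1011, ...
   block (j+1) = Feigenbaum substitution applied to block j
   (= block j duplicated with its last symbol reversed). *)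
Fixpoint kblock (j : nat) : list bool :=
  match j with
  | O => [true]
  | S j' => flat_map feig_sub (kblock j')
  end.

Definition Kseq (j : nat) (i : nat) : bool :=
  nth ((i - 1) mod 2 ^ j) (kblock j) false.

(* K_infinity = lim_j K_j.  Since kblock j is a prefix of kblock (j+1),
   the i-th symbol of K_j is constant for 2^j >= i; we take the value
   from K_i (2^i > i - 1). *)
Definition Kinf (i : nat) : bool := nth (i - 1) (kblock i) false.

Definition tau_digits (j : nat) : nat -> bool := tseq (Kseq j).
Definition tau_inf_digits : nat -> bool := tseq Kinf.

Definition eps (t : nat -> bool) (k : nat) : C :=
  if t k then RtoC (-1) else RtoC 1.

Definition is_period (t : nat -> bool) (n : nat) : Prop :=
  (0 < n)%nat /\ forall k, (1 <= k)%nat -> t (k + n)%nat = t k.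

Definition has_period (t : nat -> bool) : Prop := exists n, is_period t n.

Definition least_period (t : nat -> bool) : nat :=
  epsilon (inhabits 0%nat)
    (fun n => is_period t n /\ forall m, is_period t m -> (n <= m)%nat).

Definition eps_partial (t : nat -> bool) (z : C) (N : nat) : C :=
  sum_n_m (fun k => (eps t k * pow_n z k)%C) 1 N.

(* Milnor--Thurston formula for the reciprocal 1/zeta(tau, z):
   periodic case: (1-z)(1 + sum_{k=1}^{n-1} eps_k z^k);
   otherwise:     (1-z)(1 + sum_{k>=1} eps_k z^k)  (value of the series). *)
Definition zeta_recip (t : nat -> bool) (z : C) : C :=
  if excluded_middle_informative (has_period t) then
    ((1 - z) * (1 + eps_partial t z (least_period t - 1)))%C
  else
    ((1 - z) * (1 + @lim C_CompleteNormedModule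
                        (filtermap (eps_partial t z) eventually)))%C.

Definition zeta (t : nat -> bool) (z : C) : C := (/ zeta_recip t z)%C.

Fixpoint prod_pd (z : C) (j : nat) : C :=
  match j with
  | O => (1 - pow_n z 1)%C
  | S j' => (prod_pd z j' * (1 - pow_n z (2 ^ j)))%C
  end.

(* The digits t of tau_j (here indexed so that tau_digits j has period 2^(j+1)) are
   antiperiodic: t (k + 2^j) = negb (t k).  Indeed the Feigenbaum block of level j+1
   differs from two copies of the block of level j only in its last symbol, and two
   copies have even parity, so a whole block has odd parity.  Antiperiodicity halves the
   kneading polynomial, sum_(k < 2N) eps_k z^k = (1 - z^N) sum_(k < N) eps_k z^k, which
   yields the product formula; it also forces the least period to be 2^(j+1).
   The digits of tau_inf agree with those of tau_j below 2^(j+1) (they form the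
   Thue-Morse sequence), so they are not periodic and the partial products are partial
   sums of the kneading series of tau_inf.  For |z| < 1 the infinite product is nonzero
   because sum_n |z|^(2^n) has rapidly decaying tails, hence the reciprocals converge. *)

From Stdlib Require Import Reals List Arith Lia Lra Bool ClassicalEpsilon.
From Coquelicot Require Import Coquelicot Complex.
Import ListNotations.

Local Open Scope nat_scope.

Lemma length_kblock j : length (kblock j) = 2 ^ j.
Proof.
  induction j as [|j IHj]; [reflexivity|].
  assert (Hlen : forall l, length (flat_map feig_sub l) = 2 * length l).
  { induction l as [|[|] l IHl]; simpl; lia. }
  simpl kblock. rewrite Hlen, IHj. now rewrite Nat.pow_succ_r'.
Qed.

Lemma kblock_S_decomp j : exists B x,
  kblock j = B ++ [x] /\ kblock (S j) = kblock j ++ B ++ [negb x].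
Proof.
  induction j as [|j (B & x & Hj & HSj)]; [now exists [], true|].
  assert (Hlast : forall l y, flat_map feig_sub (l ++ [y]) = flat_map feig_sub l ++ [true; negb y]).
  { intros l [|]; now rewrite flat_map_app. }
  exists (flat_map feig_sub B ++ [true]), (negb x). split.
  - simpl kblock. rewrite Hj, Hlast. now rewrite <- app_assoc.
  - change (kblock (S (S j))) with (flat_map feig_sub (kblock (S j))).
    rewrite HSj at 1. rewrite flat_map_app, Hlast.
    change (kblock (S j)) with (flat_map feig_sub (kblock j)).
    now rewrite <- !app_assoc.
Qed.

Lemma Kseq_add_pow2 j i : 1 <= i -> Kseq j (i + 2 ^ j) = Kseq j i.
Proof.
  intros Hi. unfold Kseq.
  replace (i + 2 ^ j - 1) with (i - 1 + 1 * 2 ^ j) by lia.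
  now rewrite Nat.Div0.mod_add.
Qed.

Lemma Kseq_S j i : 1 <= i < 2 ^ S j -> Kseq (S j) i = Kseq j i.
Proof.
  intros Hi. destruct (kblock_S_decomp j) as (B & x & Hj & HSj).
  assert (HB : length B = 2 ^ j - 1)
    by (rewrite <- (length_kblock j), Hj, length_app; simpl; lia).
  pose proof (length_kblock j) as Hlen.
  rewrite Nat.pow_succ_r' in Hi. unfold Kseq. rewrite Nat.pow_succ_r', (Nat.mod_small (i - 1)) by lia.
  rewrite HSj. destruct (Nat.lt_ge_cases (i - 1) (2 ^ j)).
  - rewrite Nat.mod_small by lia. apply app_nth1. lia.
  - rewrite app_nth2, Hlen by lia.
    replace (i - 1) with (i - 1 - 2 ^ j + 1 * 2 ^ j) at 2 by lia.
    rewrite Nat.Div0.mod_add, Nat.mod_small by lia.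
    now rewrite Hj, !app_nth1 by lia.
Qed.

Lemma Kseq_S_pow2 j : Kseq (S j) (2 ^ S j) = negb (Kseq j (2 ^ S j)).
Proof.
  destruct (kblock_S_decomp j) as (B & x & Hj & HSj).
  pose proof (length_kblock j) as Hlen.
  assert (HB : length B = 2 ^ j - 1) by (rewrite <- Hlen, Hj, length_app; simpl; lia).
  pose proof (Nat.pow_nonzero 2 j) as Hpos.
  unfold Kseq. rewrite Nat.pow_succ_r'.
  replace (2 * 2 ^ j - 1) with (2 ^ j - 1 + 1 * 2 ^ j) at 2 by lia.
  rewrite Nat.Div0.mod_add, !Nat.mod_small by lia.
  rewrite HSj, app_nth2 by lia. rewrite Hj at 2.
  replace (2 * 2 ^ j - 1 - length (kblock j)) with (length B) by lia.
  replace (2 ^ j - 1) with (length B) by lia.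
  now rewrite !nth_middle.
Qed.

Lemma Kseq_le i j n : i <= j -> 1 <= n < 2 ^ S i -> Kseq j n = Kseq i n.
Proof.
  intros Hij Hn. induction Hij as [|m Hij IH]; [reflexivity|].
  rewrite Kseq_S; [exact IH|].
  split; [lia|]. apply (Nat.lt_le_trans _ (2 ^ S i)); [lia|].
  apply Nat.pow_le_mono_r; lia.
Qed.

Lemma Kinf_eq j n : 1 <= n < 2 ^ S j -> Kinf n = Kseq j n.
Proof.
  intros Hn. assert (Hdiag : Kinf n = Kseq n n).
  { unfold Kinf, Kseq. rewrite Nat.mod_small; [reflexivity|].
    pose proof (Nat.pow_gt_lin_r 2 n). lia. }
  rewrite Hdiag. destruct (Nat.le_ge_cases n j).
  - symmetry. apply Kseq_le; [assumption|]. pose proof (Nat.pow_gt_lin_r 2 (S n)). lia.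
  - apply Kseq_le; assumption.
Qed.

Lemma tseq_ext s s' k : (forall i, 1 <= i <= k -> s i = s' i) -> tseq s k = tseq s' k.
Proof.
  induction k as [|k IHk]; intros H; [reflexivity|]. simpl.
  rewrite IHk by (intros; apply H; lia). now rewrite H by lia.
Qed.

Lemma tseq_add_period s p k : (forall i, 1 <= i -> s (i + p) = s i) ->
  tseq s (k + p) = xorb (tseq s k) (tseq s p).
Proof.
  intros Hper. induction k as [|k IHk]; simpl.
  - now destruct (tseq s p).
  - rewrite IHk. replace (S (k + p)) with (S k + p) by lia. rewrite Hper by lia.
    now rewrite xorb_assoc, (xorb_comm (tseq s p)), <- xorb_assoc.
Qed.

Lemma tseq_two_periods s p : (forall i, 1 <= i -> s (i + p) = s i) -> tseq s (p + p) = false.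
Proof. intros Hper. rewrite tseq_add_period by exact Hper. apply xorb_nilpotent. Qed.

Lemma tseq_flip_last s s' n : 1 <= n -> (forall i, 1 <= i < n -> s' i = s i) ->
  s' n = negb (s n) -> tseq s' n = negb (tseq s n).
Proof.
  intros Hn Hs Hlast. destruct n as [|n]; [lia|]. simpl.
  rewrite (tseq_ext s' s) by (intros; apply Hs; lia).
  rewrite Hlast. now destruct (tseq s n), (s (S n)).
Qed.

Lemma tau_digits_le i j k : i <= j -> k < 2 ^ S i -> tau_digits j k = tau_digits i k.
Proof. intros Hij Hk. apply tseq_ext. intros n Hn. apply Kseq_le; lia. Qed.

Lemma tau_inf_digits_eq j k : k < 2 ^ S j -> tau_inf_digits k = tau_digits j k.
Proof. intros Hk. apply tseq_ext. intros n Hn. apply Kinf_eq. lia. Qed.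

Lemma tau_digits_pow2 j : tau_digits j (2 ^ j) = true.
Proof.
  destruct j as [|j]; [reflexivity|].
  pose proof (Nat.pow_nonzero 2 j) as Hpos.
  unfold tau_digits. rewrite (tseq_flip_last (Kseq j)).
  - replace (2 ^ S j) with (2 ^ j + 2 ^ j) by (rewrite Nat.pow_succ_r'; lia).
    rewrite tseq_two_periods; [reflexivity|].
    intros; apply Kseq_add_pow2; lia.
  - rewrite Nat.pow_succ_r'. lia.
  - intros; apply Kseq_S; lia.
  - apply Kseq_S_pow2.
Qed.

Lemma tau_digits_add_pow2 j k : tau_digits j (k + 2 ^ j) = negb (tau_digits j k).
Proof.
  unfold tau_digits. rewrite tseq_add_period by (intros; apply Kseq_add_pow2; lia).
  fold (tau_digits j). rewrite tau_digits_pow2. apply xorb_true_r.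
Qed.

Lemma tau_digits_flip j i k : i <= j -> k < 2 ^ i ->
  tau_digits j (k + 2 ^ i) = negb (tau_digits j k).
Proof.
  intros Hij Hk. pose proof (Nat.pow_succ_r' 2 i).
  rewrite !(tau_digits_le i j) by lia.
  apply tau_digits_add_pow2.
Qed.

Lemma tau_inf_digits_flip i k : k < 2 ^ i ->
  tau_inf_digits (k + 2 ^ i) = negb (tau_inf_digits k).
Proof.
  intros Hk. rewrite !(tau_inf_digits_eq i) by (rewrite Nat.pow_succ_r'; lia).
  apply tau_digits_add_pow2.
Qed.

Lemma periodic_add_mul (t : nat -> bool) p : (forall k, 1 <= k -> t (k + p) = t k) ->
  forall q k, 1 <= k -> t (k + q * p) = t k.
Proof.
  intros Hper q. induction q as [|q IHq]; intros k Hk.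
  - now rewrite Nat.add_0_r.
  - replace (k + S q * p) with (k + q * p + p) by lia.
    rewrite Hper by lia. now apply IHq.
Qed.

Lemma pow2_mul_odd m : 0 < m -> exists a b, m = 2 ^ a * (2 * b + 1).
Proof.
  induction m as [m IH] using lt_wf_ind. intros Hm.
  destruct (Nat.Even_or_Odd m) as [[m' Hm']|[b Hb]].
  - destruct (IH m') as (a & b & Hab); [lia|lia|].
    exists (S a), b. rewrite Nat.pow_succ_r'. lia.
  - exists 0, b. simpl. lia.
Qed.

Lemma antiperiod_twice (t : nat -> bool) p :
  (forall k, t (k + p) = negb (t k)) -> forall k, t (k + 2 * p) = t k.
Proof.
  intros Hanti k. replace (k + 2 * p) with (k + p + p) by lia.
  now rewrite !Hanti, negb_involutive.
Qed.

Lemma period_ge_of_antiperiod (t : nat -> bool) N m :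
  (forall k, t (k + 2 ^ N) = negb (t k)) -> is_period t m -> 2 ^ S N <= m.
Proof.
  intros Hanti [Hm Hper].
  destruct (pow2_mul_odd m Hm) as (a & b & Hab).
  destruct (Nat.le_gt_cases a N) as [HaN|HaN].
  2: { rewrite Hab. apply (Nat.le_trans _ (2 ^ a)); [apply Nat.pow_le_mono_r; lia|].
       apply Nat.le_mul_r. lia. }
  exfalso.
  (* a multiple of the period m that is an odd multiple of the antiperiod 2^N *)
  assert (Hmul : 2 ^ (N - a) * m = 2 ^ N + b * 2 ^ S N).
  { rewrite Hab, Nat.mul_assoc, <- Nat.pow_add_r, Nat.pow_succ_r'.
    replace (N - a + a) with N by lia. lia. }
  assert (Hper2 : forall k, 1 <= k -> t (k + 2 ^ S N) = t k)
    by (intros k _; rewrite Nat.pow_succ_r'; now apply antiperiod_twice).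
  pose proof (periodic_add_mul t m Hper (2 ^ (N - a)) 1 (le_n 1)) as Hm1.
  rewrite Hmul, Nat.add_assoc, (periodic_add_mul t _ Hper2) in Hm1 by lia.
  rewrite Hanti in Hm1. now destruct (t 1).
Qed.

Lemma least_period_eq (t : nat -> bool) n :
  is_period t n -> (forall m, is_period t m -> n <= m) -> least_period t = n.
Proof.
  intros Hn Hmin. unfold least_period.
  destruct (epsilon_spec (inhabits 0)
    (fun n => is_period t n /\ forall m, is_period t m -> n <= m)) as [Hp Hpmin].
  - now exists n.
  - apply Nat.le_antisymm; [apply Hpmin, Hn | apply Hmin, Hp].
Qed.

Lemma is_period_tau_digits j : is_period (tau_digits j) (2 ^ S j).
Proof.
  split; [apply Nat.neq_0_lt_0, Nat.pow_nonzero; lia|]. intros k _.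
  rewrite Nat.pow_succ_r'. apply antiperiod_twice, tau_digits_add_pow2.
Qed.

Lemma least_period_tau_digits j : least_period (tau_digits j) = 2 ^ S j.
Proof.
  apply least_period_eq; [apply is_period_tau_digits|].
  intros m Hm. exact (period_ge_of_antiperiod _ _ _ (tau_digits_add_pow2 j) Hm).
Qed.

Lemma not_has_period_of_flips (t : nat -> bool) :
  (forall i k, k < 2 ^ i -> t (k + 2 ^ i) = negb (t k)) -> ~ has_period t.
Proof.
  intros Hflip [n [Hn Hper]].
  pose proof (Nat.pow_gt_lin_r 2 n ltac:(lia)) as HnP.
  pose proof (Nat.div_mod (2 ^ n) n ltac:(lia)) as Hdiv.
  pose proof (Nat.mod_upper_bound (2 ^ n) n ltac:(lia)) as Hr.
  set (q := 2 ^ n / n) in *. set (r := 2 ^ n mod n) in *.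
  (* Shifting by multiples of n moves 1 + r onto 1 + 2^n and
     1 + 2r onto (1 + r) + 2^n, so t (1 + 2r) = t 1; but 1 + 2r is also congruent
     to 1 + 2^(n+1), where t takes the value negb (t 1). *)
  assert (Hr1 : t (1 + r) = negb (t 1)).
  { rewrite <- (periodic_add_mul t n Hper q) by lia.
    replace (1 + r + q * n) with (1 + 2 ^ n) by lia. apply Hflip. lia. }
  assert (Hr2 : t (1 + r + r) = t 1).
  { rewrite <- (periodic_add_mul t n Hper q) by lia.
    replace (1 + r + r + q * n) with (1 + r + 2 ^ n) by lia.
    rewrite Hflip, Hr1 by lia. apply negb_involutive. }
  assert (Htop : t (1 + 2 ^ S n) = negb (t 1)).
  { apply Hflip. pose proof (Nat.pow_gt_lin_r 2 (S n)). lia. }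
  rewrite <- (periodic_add_mul t n Hper (2 * q)) in Hr2 by lia.
  replace (1 + r + r + 2 * q * n) with (1 + 2 ^ S n) in Hr2 by (rewrite Nat.pow_succ_r'; lia).
  rewrite Hr2 in Htop. now destruct (t 1).
Qed.

Local Open Scope R_scope.
Local Open Scope C_scope.

(* The k = 0 term is 1 for the digit sequences built by [tseq], which have t 0 = false. *)
Definition eps_poly (t : nat -> bool) (z : C) : nat -> C :=
  sum_n (fun k => eps t k * pow_n z k).

Lemma eps_flip (t : nat -> bool) k k' : t k = negb (t k') -> eps t k = - eps t k'.
Proof.
  unfold eps. intros ->. destruct (t k'); simpl; apply injective_projections; simpl; ring.
Qed.

Lemma eps_poly_0 t z : t 0%nat = false -> eps_poly t z 0 = 1.
Proof.
  intros Ht0. unfold eps_poly. rewrite sum_O. unfold eps. rewrite Ht0.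
  change (pow_n z 0) with (RtoC 1). ring.
Qed.

Lemma one_add_eps_partial t z n : t 0%nat = false -> 1 + eps_partial t z n = eps_poly t z n.
Proof.
  intros Ht0. unfold eps_partial, eps_poly, sum_n.
  rewrite (sum_Sn_m _ 0 n) by lia. unfold eps at 2. rewrite Ht0.
  change (pow_n z 0) with (RtoC 1). change (plus ?a ?b) with (a + b). ring.
Qed.

Section Doubling.
Variables (t : nat -> bool) (z : C) (N : nat).
Hypothesis HN : (0 < N)%nat.
Hypothesis Hflip : forall k, (k < N)%nat -> t (k + N)%nat = negb (t k).

Lemma eps_poly_add_flip m : (m < N)%nat ->
  eps_poly t z (N + m) = eps_poly t z (N - 1) - pow_n z N * eps_poly t z m.
Proof.
  induction m as [|m IHm]; intros Hm; unfold eps_poly in *.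
  - replace (N + 0)%nat with (S (N - 1)) by lia. rewrite sum_Sn, sum_O.
    replace (S (N - 1)) with (0 + N)%nat by lia.
    rewrite (eps_flip t _ 0) by (apply Hflip; lia).
    change (plus ?a ?b) with (a + b). change (pow_n z 0) with (RtoC 1).
    simpl Nat.add. ring.
  - replace (N + S m)%nat with (S (N + m)) by lia. rewrite !sum_Sn, IHm by lia.
    replace (S (N + m)) with (S m + N)%nat by lia.
    rewrite (eps_flip t _ (S m)) by (apply Hflip; lia). rewrite pow_n_plus.
    change (plus ?a ?b) with (a + b). change (mult ?a ?b) with (a * b). ring.
Qed.

Lemma eps_poly_double :
  eps_poly t z (2 * N - 1) = eps_poly t z (N - 1) * (1 - pow_n z N).
Proof.
  replace (2 * N - 1)%nat with (N + (N - 1))%nat by lia.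
  rewrite eps_poly_add_flip by lia. ring.
Qed.

End Doubling.

Lemma eps_poly_pow2 t z J : t 0%nat = false ->
  (forall i k, (i <= J)%nat -> (k < 2 ^ i)%nat -> t (k + 2 ^ i)%nat = negb (t k)) ->
  eps_poly t z (2 ^ S J - 1) = prod_pd z J.
Proof.
  intros Ht0. induction J as [|J IHJ]; intros Hflip;
    rewrite Nat.pow_succ_r', eps_poly_double;
    try (apply Nat.neq_0_lt_0, Nat.pow_nonzero; lia);
    try (intros k Hk; apply Hflip; lia).
  - rewrite eps_poly_0 by exact Ht0. simpl. ring.
  - rewrite IHJ; [reflexivity|]. intros i k Hi Hk. apply Hflip; lia.
Qed.

Lemma zeta_recip_tau_digits j z : zeta_recip (tau_digits j) z = (1 - z) * prod_pd z j.
Proof.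
  unfold zeta_recip. destruct excluded_middle_informative as [_|Hnp].
  - rewrite least_period_tau_digits, one_add_eps_partial, eps_poly_pow2; try reflexivity.
    intros i k Hi Hk. now apply tau_digits_flip.
  - exfalso. apply Hnp. exists (2 ^ S j)%nat. apply is_period_tau_digits.
Qed.

Lemma Cmult_eq0 (a b : C) : a * b = 0 -> a = 0 \/ b = 0.
Proof.
  intros Hab. apply (f_equal Cmod) in Hab. rewrite Cmod_mult, Cmod_0 in Hab.
  destruct (Rmult_integral _ _ Hab); [left|right]; now apply Cmod_eq_0.
Qed.

Lemma one_sub_pow_eq0 (z : C) n : (0 < n)%nat -> 1 - pow_n z n = 0 -> Cmod z = 1%R.
Proof.
  intros Hn Hz. change (pow_n z n) with (z ^ n) in Hz.
  assert (Hz1 : z ^ n = 1) by (replace (z ^ n) with (1 - (1 - z ^ n)) by ring; rewrite Hz; ring).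
  assert (Hpow : (Cmod z ^ n = 1)%R) by (rewrite <- Cmod_pow, Hz1; apply Cmod_1).
  destruct (pow_R1 _ _ Hpow) as [Habs|]; [|lia].
  now rewrite Rabs_pos_eq in Habs by apply Cmod_ge_0.
Qed.

Lemma prod_pd_eq0 z j : prod_pd z j = 0 -> Cmod z = 1%R.
Proof.
  induction j as [|j IHj]; simpl; intros Hz.
  - exact (one_sub_pow_eq0 z 1 Nat.lt_0_1 Hz).
  - destruct (Cmult_eq0 _ _ Hz) as [Hz'|Hz']; [exact (IHj Hz')|].
    refine (one_sub_pow_eq0 z _ _ Hz'). pose proof (Nat.pow_nonzero 2 j). lia.
Qed.

Lemma zeta_recip_tau_digits_eq0 j z : zeta_recip (tau_digits j) z = 0 -> Cmod z = 1%R.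
Proof.
  rewrite zeta_recip_tau_digits. intros Hz. destruct (Cmult_eq0 _ _ Hz) as [Hz'|Hz'].
  - apply (one_sub_pow_eq0 z 1 Nat.lt_0_1). change (pow_n z 1) with (z * 1).
    now rewrite Cmult_1_r.
  - exact (prod_pd_eq0 z j Hz').
Qed.

Lemma lim_filtermap {K : AbsRing} {V : CompleteNormedModule K} {T : Type}
  (F : (T -> Prop) -> Prop) {FF : ProperFilter F} (f : T -> V) (l : V) :
  filterlim f F (locally l) -> lim (filtermap f F) = l.
Proof.
  intros Hf.
  assert (Hcauchy : cauchy (filtermap f F)).
  { intros eps. exists l. apply Hf, locally_ball. }
  assert (Hlim : filterlim f F (locally (lim (filtermap f F)))).
  { apply filterlim_locally. intros eps.
    exact (complete_cauchy _ (filtermap_proper_filter _ _ f F FF) Hcauchy eps). }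
  exact (filterlim_locally_unique f _ _ Hlim Hf).
Qed.

Lemma filterlim_Cmult_l {T : Type} (F : (T -> Prop) -> Prop) {FF : Filter F}
  (f : T -> C) (c l : C) :
  filterlim f F (locally l) -> filterlim (fun x => c * f x) F (locally (c * l)).
Proof. intros Hf. eapply filterlim_comp; [exact Hf|exact (filterlim_scal_r c l)]. Qed.

Lemma filterlim_Cinv {T : Type} (F : (T -> Prop) -> Prop) {FF : Filter F}
  (f : T -> C) (l : C) :
  l <> 0 -> filterlim f F (locally l) -> filterlim (fun x => / f x) F (locally (/ l)).
Proof.
  intros Hl Hf. apply Cmod_gt_0 in Hl.
  rewrite (filterlim_locally_ball_norm (K := C_AbsRing) (U := C_NormedModule)) in Hf |- *.
  intros eps.
  assert (Hl2 : (0 < Cmod l / 2)%R) by lra.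
  assert (He : (0 < eps * (Cmod l * Cmod l) / 2)%R)
    by (pose proof (cond_pos eps); apply Rdiv_lt_0_compat; [apply Rmult_lt_0_compat|]; nra).
  generalize (filter_and _ _ (Hf (mkposreal _ Hl2)) (Hf (mkposreal _ He))).
  apply filter_imp. intros x [Hnear Hclose]. unfold ball_norm in *; simpl in *.
  change (minus ?a ?b) with (a - b) in *. change (norm ?a) with (Cmod a) in *.
  (* |f x| >= |l| / 2, hence |1/f x - 1/l| = |f x - l| / (|f x| |l|) <= 2 |f x - l| / |l|^2 *)
  assert (Hfx : (Cmod l / 2 <= Cmod (f x))%R).
  { pose proof (Cmod_triangle (- (f x - l)) (f x)) as Htri.
    replace (- (f x - l) + f x) with l in Htri by ring. rewrite Cmod_opp in Htri. lra. }
  assert (Hfx0 : f x <> 0) by (apply Cmod_gt_0; lra).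
  replace (/ f x - / l) with (- (f x - l) / (f x * l))
    by (field; split; [now apply Cmod_gt_0|exact Hfx0]).
  rewrite Cmod_div, Cmod_mult, Cmod_opp by (apply Cmod_gt_0; rewrite Cmod_mult; nra).
  apply Rlt_div_l; [nra|].
  pose proof (cond_pos eps). nra.
Qed.

Lemma Cmod_lim_ge {T : Type} (F : (T -> Prop) -> Prop) {FF : ProperFilter F}
  (f : T -> C) (l : C) (c : R) :
  filterlim f F (locally l) -> F (fun x => c <= Cmod (f x))%R -> (c <= Cmod l)%R.
Proof.
  intros Hf Hc. destruct (Rle_lt_dec c (Cmod l)) as [|Hlt]; [assumption|exfalso].
  rewrite filterlim_locally_ball_norm in Hf.
  assert (He : (0 < c - Cmod l)%R) by lra.
  destruct (filter_ex _ (filter_and _ _ Hc (Hf (mkposreal _ He)))) as [x [Hcx Hx]].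
  unfold ball_norm in Hx; simpl in Hx. change (norm (minus (f x) l)) with (Cmod (f x - l)) in Hx.
  pose proof (Cmod_triangle (f x - l) l) as Htri.
  replace (f x - l + l) with (f x) in Htri by ring. lra.
Qed.

Lemma eps_poly_cvg t z : (Cmod z < 1)%R -> exists L, filterlim (eps_poly t z) eventually (locally L).
Proof.
  intros Hz. apply (ex_series_le (K := C_AbsRing) (V := C_CompleteNormedModule) _ (fun n => Cmod z ^ n)%R).
  - intros n. change (norm ?a) with (Cmod a).
    rewrite Cmod_mult. change (pow_n z n) with (z ^ n). rewrite Cmod_pow.
    assert (Heps : Cmod (eps t n) = 1%R)
      by (unfold eps; destruct (t n); rewrite Cmod_R; [apply Rabs_m1|apply Rabs_R1]).
    rewrite Heps. lra.
  - apply ex_series_geom. rewrite Rabs_pos_eq by apply Cmod_ge_0. exact Hz.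
Qed.

Lemma zeta_recip_tau_inf z L : filterlim (eps_poly tau_inf_digits z) eventually (locally L) ->
  zeta_recip tau_inf_digits z = (1 - z) * L.
Proof.
  intros HL. unfold zeta_recip. destruct excluded_middle_informative as [Hp|_].
  - exfalso. exact (not_has_period_of_flips _ tau_inf_digits_flip Hp).
  - rewrite (lim_filtermap _ _ (L + - 1)); [f_equal; ring|].
    apply (filterlim_ext (fun n => eps_poly tau_inf_digits z n + - 1)).
    + intros n. rewrite <- one_add_eps_partial by reflexivity. ring.
    + exact (filterlim_comp_2 _ _ _ HL (filterlim_const _) (filterlim_plus L (- 1 : C))).
Qed.

Lemma prod_pd_eq_eps_poly_tau_inf z N : prod_pd z N = eps_poly tau_inf_digits z (2 ^ S N - 1).
Proof.
  symmetry. apply eps_poly_pow2; [reflexivity|].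
  intros i k _ Hk. now apply tau_inf_digits_flip.
Qed.

Lemma prod_pd_cvg z L : filterlim (eps_poly tau_inf_digits z) eventually (locally L) ->
  filterlim (prod_pd z) eventually (locally L).
Proof.
  intros HL. apply (filterlim_ext (fun N => eps_poly tau_inf_digits z (2 ^ S N - 1))).
  - intros N. symmetry. apply prod_pd_eq_eps_poly_tau_inf.
  - eapply filterlim_comp; [apply eventually_subseq|exact HL].
    intros n. rewrite (Nat.pow_succ_r' 2 (S n)). pose proof (Nat.pow_nonzero 2 (S n)). lia.
Qed.

Lemma Cmod_one_sub_ge w : (1 - Cmod w <= Cmod (1 - w))%R.
Proof.
  pose proof (Cmod_triangle (1 - w) w) as Htri.
  replace (1 - w + w) with (RtoC 1) in Htri by ring. rewrite Cmod_1 in Htri. lra.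
Qed.

Lemma pow_le_pow_of_le_1 x m n : (0 <= x <= 1)%R -> (m <= n)%nat -> (x ^ n <= x ^ m)%R.
Proof.
  intros Hx Hmn. replace n with (m + (n - m))%nat by lia. rewrite pow_add.
  pose proof (pow_le x m (proj1 Hx)).
  assert (Hle1 : (x ^ (n - m) <= 1)%R) by (rewrite <- (pow1 (n - m)); now apply pow_incr).
  nra.
Qed.

(* Each |z|^(2^n) is the square of the previous one, so once it is small the tail
   sum over n > M is at most twice its first term. *)
Lemma Cmod_prod_pd_tail z M d : (Cmod z < 1)%R ->
  (Cmod (prod_pd z M) * (1 - 2 * Cmod z ^ 2 ^ S M + Cmod z ^ 2 ^ S (M + d))
    <= Cmod (prod_pd z (M + d)))%R.
Proof.
  intros Hz. set (x := Cmod z) in *. assert (Hx : (0 <= x)%R) by apply Cmod_ge_0.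
  set (y := (x ^ 2 ^ S M)%R). pose proof (Cmod_ge_0 (prod_pd z M)) as HPM.
  induction d as [|d IHd].
  - rewrite Nat.add_0_r. fold y. assert (0 <= y)%R by (apply pow_le; lra). nra.
  - set (w := (x ^ 2 ^ S (M + d))%R) in IHd.
    assert (Hw : (0 <= w <= y)%R).
    { split; [apply pow_le; lra|]. apply pow_le_pow_of_le_1; [lra|].
      apply Nat.pow_le_mono_r; lia. }
    assert (Hw1 : (w <= 1)%R) by (unfold w; rewrite <- (pow1 (2 ^ S (M + d))); apply pow_incr; lra).
    assert (Hnext : (x ^ 2 ^ S (M + S d) = w * w)%R).
    { rewrite Nat.add_succ_r, (Nat.pow_succ_r' 2 (S (M + d))), Nat.mul_comm, pow_mult.
      unfold w. ring. }
    assert (Hfactor : (1 - w <= Cmod (1 - pow_n z (2 ^ S (M + d))))%R).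
    { unfold w, x. rewrite <- (Cmod_pow z). apply Cmod_one_sub_ge. }
    rewrite Hnext, Nat.add_succ_r. simpl prod_pd. rewrite Cmod_mult.
    (* (1 - 2y + w)(1 - w) = (1 - 2y + w^2) + 2w(y - w) *)
    apply Rle_trans with (Cmod (prod_pd z M) * (1 - 2 * y + w) * (1 - w))%R.
    + assert (0 <= Cmod (prod_pd z M) * (w * (y - w)))%R
        by (apply Rmult_le_pos; [lra|nra]).
      fold y. nra.
    + apply Rle_trans with (Cmod (prod_pd z (M + d)) * (1 - w))%R.
      * apply Rmult_le_compat_r; lra.
      * apply Rmult_le_compat_l; [apply Cmod_ge_0|exact Hfactor].
Qed.

Lemma prod_pd_eventually_ge z : (Cmod z < 1)%R ->
  exists c, (0 < c)%R /\ eventually (fun N => c <= Cmod (prod_pd z N))%R.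
Proof.
  intros Hz. assert (Habs : (Rabs (Cmod z) < 1)%R) by (rewrite Rabs_pos_eq by apply Cmod_ge_0; exact Hz).
  destruct (pow_lt_1_zero _ Habs (/ 4) ltac:(lra)) as [M HM].
  assert (Hy : (Cmod z ^ 2 ^ S M < / 4)%R).
  { specialize (HM (2 ^ S M)%nat ltac:(pose proof (Nat.pow_gt_lin_r 2 (S M)); lia)).
    rewrite Rabs_pos_eq in HM by (apply pow_le, Cmod_ge_0). exact HM. }
  assert (HPM : (0 < Cmod (prod_pd z M))%R).
  { apply Cmod_gt_0. intros H0. apply prod_pd_eq0 in H0. lra. }
  exists (Cmod (prod_pd z M) / 2)%R. split; [lra|]. exists M. intros N HN.
  replace N with (M + (N - M))%nat by lia.
  pose proof (Cmod_prod_pd_tail z M (N - M) Hz).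
  pose proof (pow_le (Cmod z) (2 ^ S (M + (N - M))) (Cmod_ge_0 z)). nra.
Qed.

Lemma tau_inf_limit z : (Cmod z < 1)%R -> exists L : C, L <> 0 /\
  filterlim (prod_pd z) eventually (locally L) /\ zeta_recip tau_inf_digits z = (1 - z) * L.
Proof.
  intros Hz. destruct (eps_poly_cvg tau_inf_digits z Hz) as [L HL].
  pose proof (prod_pd_cvg z L HL) as HP.
  destruct (prod_pd_eventually_ge z Hz) as (c & Hc & Hge).
  exists L. split; [|split; [exact HP|exact (zeta_recip_tau_inf z L HL)]].
  apply Cmod_gt_0. pose proof (Cmod_lim_ge _ _ _ _ HP Hge). lra.
Qed.

Theorem mainTheorem8 :
  (forall j : nat, (1 <= j)%nat ->
     (forall z : C, zeta_recip (tau_digits j) z = ((1 - z) * prod_pd z j)%C) /\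
     (forall z : C, zeta_recip (tau_digits j) z = 0%C -> Cmod z = 1%R)) /\
  (forall z : C, (Cmod z < 1)%R ->
     filterlim (fun j => zeta (tau_digits j) z) eventually
               (locally (zeta tau_inf_digits z))) /\
  (forall z : C, (Cmod z < 1)%R ->
     filterlim (fun N => ((1 - z) * prod_pd z N)%C) eventually
               (locally (zeta_recip tau_inf_digits z))).
Proof.
  split; [|split].
  - intros j _. split; [apply zeta_recip_tau_digits|apply zeta_recip_tau_digits_eq0].
  - intros z Hz. destruct (tau_inf_limit z Hz) as (L & HL0 & HP & HZ).
    assert (Hz1 : 1 - z <> 0) by (apply Cmod_gt_0; pose proof (Cmod_one_sub_ge z); lra).
    unfold zeta. rewrite HZ.
    apply (filterlim_ext (fun j => / ((1 - z) * prod_pd z j))).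
    { intros j. now rewrite zeta_recip_tau_digits. }
    apply (filterlim_Cinv eventually).
    + intros H0. now destruct (Cmult_eq0 _ _ H0).
    + exact (filterlim_Cmult_l eventually _ _ _ HP).
  - intros z Hz. destruct (tau_inf_limit z Hz) as (L & _ & HP & ->).
    exact (filterlim_Cmult_l eventually _ _ _ HP).
Qed.
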